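(* Under Assumptions A1–A3 (with constant $p$), the valuation operator $V$ is irreducible on $L_p(\pi)$: the only closed ideals $J\subset L_p(\pi)$ with $V(J)\subset J$ are $\{0\}$ and $L_p(\pi)$.
   Context: Standing setting: $\{X_t\}_{t\ge0}$ is a stationary Markov process on a separable completely metrizable space $\mathsf X$ with transition kernel $\Pi$, $n$-step kernel $\Pi^n$, and stationary law $\pi$; $\{\eta_t\}$ iid with law $\nu$ on $\mathsf W$, independent of $\{X_t\}$; $\phi,g\ge0$ Borel on $\mathsf X\times\mathsf X\times\mathsf W$ with $\Phi_{t+1}=\phi(X_t,X_{t+1},\eta_{t+1})$, $G_{t+1}=g(X_t,X_{t+1},\eta_{t+1})$. $L_p(\pi)$ is the Banach lattice of $p$-integrable functions modulo $\pi$-null sets with $\pi$-a.e. order; $\mathcal H_p$ its nonnegative elements. An ideal is a vector subspace $J$ such that $f\in J$ whenever $|f|\le|h|$ for some $h\in J$. Valuation operator $Vh(x)=\int h(y)[\int\phi(x,y,\eta)\nu(d\eta)]\Pi(x,dy)$; $\hat g(x)=\int\int\phi g\,d\nu\,\Pi(x,dy)$. A1: $\phi>0$ everywhere and $G_t>0$ with positive probability. A2: for all Borel $B$ with $\pi(B)>0$ and all $x$, $\Pi^n(x,B)>0$ for some $n$. A3: for some $p\ge1$, $\hat g\in\mathcal H_p$ and $V$ maps $L_p(\pi)$ into itself with some power $V^i$ compact. *)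

From HB Require Import structures.
From mathcomp Require Import all_boot all_order all_algebra.
From mathcomp Require Import all_classical all_reals all_analysis.
Set Implicit Arguments.
Unset Strict Implicit.
Unset Printing Implicit Defensive.
Import Order.TTheory GRing.Theory Num.Theory.
Import numFieldNormedType.Exports.
Local Open Scope classical_set_scope.
Local Open Scope ring_scope.

Section polish.
Context {R : realType} {T : Type}.

Definition is_metric (dist : T -> T -> R) : Prop :=
  (forall x y, 0 <= dist x y) /\ (forall x y, dist x y = 0 <-> x = y) /\
  (forall x y, dist x y = dist y x) /\
  (forall x y z, dist x z <= dist x y + dist y z).

Definition metric_open (dist : T -> T -> R) (U : set T) : Prop :=
  forall x, U x -> exists2 r : R, 0 < r & forall y, dist x y < r -> U y.

Definition metric_complete (dist : T -> T -> R) : Prop :=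
  forall u : nat -> T,
    (forall e : R, 0 < e -> exists N, forall m n, (N <= m)%N -> (N <= n)%N ->
        dist (u m) (u n) < e) ->
    exists l, forall e : R, 0 < e -> exists N, forall n, (N <= n)%N -> dist (u n) l < e.

Definition metric_separable (dist : T -> T -> R) : Prop :=
  exists u : nat -> T, forall x (e : R), 0 < e -> exists n, dist x (u n) < e.
End polish.

Definition polish_borel (R : realType) d (X : measurableType d) : Prop :=
  exists dist : X -> X -> R,
    [/\ is_metric dist, metric_complete dist, metric_separable dist &
        @measurable d X = <<s metric_open dist >>].

Section valuation.
Context {R : realType} {dX dW : measure_display}
  {X : measurableType dX} {W : measurableType dW}.
Local Open Scope ereal_scope.

Fixpoint kiter (Pi : R.-pker X ~> X) (n : nat) (x : X) (B : set X) : \bar R :=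
  match n with
  | 0%N => (\1_B x)%:E
  | n'.+1 => \int[Pi x]_y kiter Pi n' y B
  end.

Definition phibar (nu : probability W R) (phi : X * X * W -> R) (x y : X) : \bar R :=
  \int[nu]_e (phi (x, y, e))%:E.

Definition Vop (Pi : R.-pker X ~> X) (nu : probability W R) (phi : X * X * W -> R)
  (h : X -> R) : X -> R :=
  fun x => fine (\int[Pi x]_y ((h y)%:E * phibar nu phi x y)).

Definition ghat (Pi : R.-pker X ~> X) (nu : probability W R) (phi g : X * X * W -> R)
  : X -> \bar R :=
  fun x => \int[Pi x]_y \int[nu]_e (phi (x, y, e) * g (x, y, e))%:E.

Definition inLp (pi : probability X R) (p : R) (f : X -> R) : Prop :=
  f \in Lfun pi p%:E.

Definition inHp (pi : probability X R) (p : R) (f : X -> \bar R) : Prop :=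
  (forall x, 0 <= f x) /\ {ae pi, forall x, f x < +oo} /\ inLp pi p (fine \o f).

(* compactness of an operator on L_p(pi): image of the unit ball is relatively
   compact, i.e. every bounded sequence has a subsequence whose image converges in L_p *)
Definition Lp_compact (pi : probability X R) (p : R) (T : (X -> R) -> (X -> R)) : Prop :=
  forall u : nat -> X -> R,
    (forall n, inLp pi p (u n) /\ 'N[pi]_p%:E [EFin \o u n] <= 1) ->
    exists (s : nat -> nat) (f : X -> R),
      [/\ {homo s : m n / (m < n)%N >-> (m < n)%N}, inLp pi p f &
          (fun n => 'N[pi]_p%:E [EFin \o (fun x => T (u (s n)) x - f x)%R]) @ \oo --> 0].

(* closed ideal of L_p(pi), represented as a set of representatives (saturated
   under pi-a.e. equality via solidity) *)
Definition Lp_closed_ideal (pi : probability X R) (p : R) (J : set (X -> R)) : Prop :=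
  J `<=` inLp pi p /\
  J (fun=> 0%R) /\
  (forall f h, J f -> J h -> J (fun x => f x + h x)%R) /\
  (forall (a : R) f, J f -> J (fun x => a * f x)%R) /\
  (forall f h, J h -> inLp pi p f -> {ae pi, forall x, (`|f x| <= `|h x|)%R} -> J f) /\
  (forall (u : nat -> X -> R) f, (forall n, J (u n)) -> inLp pi p f ->
     (fun n => 'N[pi]_p%:E [EFin \o (fun x => u n x - f x)%R]) @ \oo --> 0 -> J f).

End valuation.

(* Let J be a closed V-invariant ideal containing some h that is not a.e. zero.
   Since J is solid and closed, the measurable sets A with 1_A in J are stable
   under countable unions, so there is a largest one up to null sets, and every
   element of J vanishes a.e. off it; as h lies in J, this A has positive
   measure. Because phi > 0, the relation V 1_A = 0 off A means that Pi(x, A) = 0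
   for a.e. x off A; stationarity propagates this to every iterate Pi^n(x, A),
   so A2 forces the complement of A to be null. Then 1 is in J, and truncating
   any f in L_p shows f in J. *)

From HB Require Import structures.
From mathcomp Require Import all_boot all_order all_algebra.
From mathcomp Require Import all_classical all_reals all_analysis.
From mathcomp Require Import measurable_realfun lra.
Set Implicit Arguments.
Unset Strict Implicit.
Unset Printing Implicit Defensive.
Import Order.TTheory GRing.Theory Num.Theory.
Import numFieldNormedType.Exports.
Local Open Scope classical_set_scope.
Local Open Scope ring_scope.

Lemma powR_cvgn0 (R : realType) (u : R^nat) (r : R) : 0 < r ->
  (forall n, 0 <= u n) -> u @ \oo --> 0 -> (fun n => u n `^ r) @ \oo --> 0.
Proof.
move=> r0 u0 /cvgr0Pnorm_lt cu; apply/cvgr0Pnorm_lt => e e0.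
have e1 : 0 < e `^ r^-1 by rewrite powR_gt0.
apply: filterS (cu _ e1) => n; rewrite !ger0_norm ?powR_ge0// => une.
have := gt0_ltr_powR r0 _ _ une.
rewrite -powRrM mulVf ?gt_eqF// powRr1 ?(ltW e0)//; apply; rewrite nnegrE//.
exact: ltW.
Qed.

Section level_sets.
Context (R : realType) (d : measure_display) (T : measurableType d).

Lemma measurable_norm_gt (f : T -> R) (c : R) : measurable_fun setT f ->
  measurable [set x | c < `|f x|].
Proof.
move=> mf; rewrite -[X in measurable X]setTI.
exact: (measurable_fun_ltr (measurable_cst c) (measurableT_comp (@normr_measurable R _) mf))
  measurableT [set true] I.
Qed.

Lemma measurable_norm_le (f : T -> R) (c : R) : measurable_fun setT f ->
  measurable [set x | `|f x| <= c].
Proof.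
move=> mf; rewrite -[X in measurable X]setTI.
exact: (measurable_fun_ler (measurableT_comp (@normr_measurable R _) mf) (measurable_cst c))
  measurableT [set true] I.
Qed.

Lemma ae_eq0_of_level_sets (mu : {measure set T -> \bar R}) (f : T -> R) (D : set T) :
  measurable_fun setT f -> measurable D ->
  (forall k : nat, mu ([set x | k.+1%:R^-1 < `|f x|] `&` D) = 0%E) ->
  {ae mu, forall x, D x -> f x = 0}.
Proof.
move=> mf mD null_level.
apply: (@negligibleS _ _ _ mu (\bigcup_k ([set x | k.+1%:R^-1 < `|f x|] `&` D))).
  move=> x /= /not_implyP [Dx fx0]; exists (Num.truncn `|f x|^-1) => //.
  have fx_gt0 : 0 < `|f x| by rewrite normr_gt0; exact/eqP.
  split => //=; rewrite invf_plt ?posrE ?ltr0n//; exact: truncnS_gt.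
apply: negligible_bigcup => k; exists ([set x | k.+1%:R^-1 < `|f x|] `&` D).
split => //; apply: measurableI mD; exact: measurable_norm_gt.
Qed.

End level_sets.

Section Lp.
Context (R : realType) (d : measure_display) (X : measurableType d)
  (pi : probability X R) (p : R).
Hypothesis p1 : 1 <= p.

Let p_gt0 : 0 < p. Proof. exact: lt_le_trans ltr01 p1. Qed.

Lemma LnormE (f : X -> R) :
  ('N[pi]_p%:E [EFin \o f] = (\int[pi]_x (`|f x| `^ p)%:E) `^ p^-1)%E.
Proof. by rewrite unlock /=; congr poweR; apply: eq_integral. Qed.

Lemma inLpP (f : X -> R) : inLp pi p f <->
  measurable_fun setT f /\ ('N[pi]_p%:E [EFin \o f] < +oo)%E.
Proof.
rewrite /inLp inE; split => [/andP[]|[mf nf]]; first by rewrite !inE.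
by apply/andP; split; rewrite inE.
Qed.

Lemma measurable_powR_norm (f : X -> R) : measurable_fun setT f ->
  measurable_fun setT (fun x => (`|f x| `^ p)%:E : \bar R).
Proof.
move=> mf; apply/measurable_EFinP.
apply: (measurableT_comp (measurable_powR _)); exact: measurableT_comp.
Qed.

Lemma le_Lnorm (f g : X -> R) : measurable_fun setT f -> measurable_fun setT g ->
  (forall x, `|f x| <= `|g x|) ->
  ('N[pi]_p%:E [EFin \o f] <= 'N[pi]_p%:E [EFin \o g])%E.
Proof.
move=> mf mg fg; rewrite !LnormE.
apply: gt0_ler_poweR; first by rewrite invr_ge0 ltW.
- by rewrite in_itv/= leey andbT integral_ge0// => x _; rewrite lee_fin powR_ge0.
- by rewrite in_itv/= leey andbT integral_ge0// => x _; rewrite lee_fin powR_ge0.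
apply: ge0_le_integral => //; [exact: measurable_powR_norm mf|
  exact: measurable_powR_norm mg|].
by move=> x _; rewrite lee_fin ge0_ler_powR ?nnegrE// ltW.
Qed.

Lemma inLp_le (f g : X -> R) : measurable_fun setT f -> inLp pi p g ->
  (forall x, `|f x| <= `|g x|) -> inLp pi p f.
Proof.
move=> mf /inLpP[mg ng] fg; apply/inLpP; split => //.
by apply: le_lt_trans ng; exact: le_Lnorm.
Qed.

Lemma inLp_bounded (f : X -> R) (c : R) : measurable_fun setT f ->
  (forall x, `|f x| <= c) -> inLp pi p f.
Proof.
move=> mf fc; apply: (@inLp_le f (cst c)) => //; first exact: Lfun_cst.
by move=> x; rewrite (le_trans (fc x))// ler_norm.
Qed.

Lemma inLp_indic (A : set X) : measurable A -> inLp pi p \1_A.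
Proof.
move=> mA; apply: (@inLp_bounded _ 1) => // x.
by rewrite indicE; case: (_ \in _); rewrite ?normr1 ?normr0.
Qed.

Lemma inLp_integral_fin_num (f : X -> R) : inLp pi p f ->
  (\int[pi]_x (`|f x| `^ p)%:E \is a fin_num)%E.
Proof.
move=> Lf; have /integrableP[mf] := Lfun_integrable p1 Lf.
rewrite ge0_fin_numE; last by apply: integral_ge0 => x _; rewrite lee_fin powR_ge0.
by under eq_integral => x _ do rewrite gee0_abs ?lee_fin ?powR_ge0//.
Qed.

Lemma Lnorm_cvg0_dominated (g_ : nat -> X -> R) (G : X -> R) :
  (forall n, measurable_fun setT (g_ n)) -> (forall x, g_ ^~ x @ \oo --> 0) ->
  inLp pi p G -> (forall n x, `|g_ n x| <= `|G x|) ->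
  ('N[pi]_p%:E [EFin \o g_ n])%E @[n --> \oo] --> 0%E.
Proof.
move=> mg cg LG gG.
have [mG _] := (inLpP G).1 LG.
have iG := Lfun_integrable p1 LG.
pose I n := (\int[pi]_x (`|g_ n x| `^ p)%:E)%E.
have I_cvg0 : I n @[n --> \oo] --> 0%E.
  have := @dominated_cvg _ _ _ pi setT measurableT
    (fun n x => (`|g_ n x| `^ p)%:E) (cst 0%E) (fun x => (`|G x| `^ p)%:E).
  rewrite integral0; apply => //.
  - by move=> n; exact: measurable_powR_norm.
  - move=> x _; apply: cvg_EFin; first exact: nearW.
    apply: (@powR_cvgn0 _ (fun n => `|g_ n x|)) => //.
    by have := cvg_norm (cg x); rewrite normr0; apply.
  - move=> n x _; rewrite gee0_abs ?lee_fin ?powR_ge0//.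
    by rewrite ge0_ler_powR ?nnegrE// ltW.
have I_fin n : (I n \is a fin_num)%E.
  by apply: inLp_integral_fin_num; apply: inLp_le LG (gG n).
have -> : (fun n => 'N[pi]_p%:E [EFin \o g_ n])%E =
          (fun n => ((fine (I n)) `^ p^-1)%:E).
  by apply/funext => n; rewrite LnormE -/(I n) -(fineK (I_fin n)) poweR_EFin.
apply: cvg_EFin; first exact: nearW.
apply: (@powR_cvgn0 _ (fun n => fine (I n))); first by rewrite invr_gt0.
  by move=> n; apply: fine_ge0; apply: integral_ge0 => x _; rewrite lee_fin powR_ge0.
exact: fine_cvg.
Qed.

End Lp.

Section closed_ideal.
Context (R : realType) (d : measure_display) (X : measurableType d)
  (pi : probability X R) (p : R) (J : set (X -> R)).
Hypotheses (p1 : 1 <= p) (HJ : Lp_closed_ideal pi p J).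

Let ideal_inLp : J `<=` inLp pi p. Proof. by case: HJ. Qed.
Let ideal0 : J (fun=> 0). Proof. by case: HJ => _ [+ _]. Qed.
Let idealD f h : J f -> J h -> J (fun x => f x + h x).
Proof. by case: HJ => _ [_ [H _]]; apply: H. Qed.
Let idealZ a f : J f -> J (fun x => a * f x).
Proof. by case: HJ => _ [_ [_ [H _]]]; apply: H. Qed.
Let ideal_solid f h : J h -> inLp pi p f -> {ae pi, forall x, `|f x| <= `|h x|} -> J f.
Proof. by case: HJ => _ [_ [_ [_ [H _]]]]; apply: H. Qed.
Let ideal_closed (u : nat -> X -> R) f : (forall n, J (u n)) -> inLp pi p f ->
  (fun n => 'N[pi]_p%:E [EFin \o (fun x => (u n x - f x)%R)])%E @ \oo --> 0%E -> J f.
Proof. by case: HJ => _ [_ [_ [_ [_ H]]]]; apply: H. Qed.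

Let measurable_ideal f : J f -> measurable_fun setT f.
Proof. by move=> /ideal_inLp /inLpP []. Qed.

Definition ideal_set (A : set X) := measurable A /\ J \1_A.

Lemma ideal_set_level (f : X -> R) (k : nat) : J f ->
  ideal_set [set x | k.+1%:R^-1 < `|f x|].
Proof.
move=> Jf; have mE := measurable_norm_gt k.+1%:R^-1 (measurable_ideal Jf).
split => //; apply: (@ideal_solid _ (fun x => k.+1%:R * f x)).
- exact: idealZ.
- exact: inLp_indic.
apply: aeW => x; rewrite indicE; case: (boolP (x \in _)); last by rewrite normr0.
rewrite inE /= normr1 normrM ger0_norm// => fx_gt.
by rewrite -ler_pdivrMl// mulr1 ltW.
Qed.

Lemma ideal_setU (A B : set X) : ideal_set A -> ideal_set B -> ideal_set (A `|` B).
Proof.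
move=> [mA JA] [mB JB]; split; first exact: measurableU.
apply: (ideal_solid (idealD JA JB)); first exact/inLp_indic/measurableU.
apply: aeW => x; rewrite !indicE in_setU.
by case: (x \in A); case: (x \in B); rewrite /= ?normr1 ?normr0 ?add0r ?addr0//;
  rewrite ger0_norm ?addr_ge0 ?ler01//; lra.
Qed.

(* The indicators of the finite partial unions converge to that of the union
   in L_p, by dominated convergence. *)
Lemma ideal_set_bigcup (B : nat -> set X) : (forall n, ideal_set (B n)) ->
  ideal_set (\bigcup_n B n).
Proof.
move=> JB; pose U n := \big[setU/set0]_(i < n) B i.
have JU n : ideal_set (U n).
  elim: n => [|n IH]; first by rewrite /U big_ord0; split; rewrite ?indic0.
  by rewrite /U big_ord_recr /=; apply: ideal_setU.
have mA : measurable (\bigcup_n B n) by apply: bigcupT_measurable => n; case: (JB n).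
split => //; apply: (@ideal_closed (fun n => \1_(U n))); first by move=> n; case: (JU n).
  exact: inLp_indic.
apply: (Lnorm_cvg0_dominated p1 (G := cst 1)).
- by move=> n; apply: measurable_funB; apply: measurable_indic; case: (JU n).
- move=> x; apply: cvg_near_cst.
  have [[k _ Bkx]|nBx] := pselect ((\bigcup_n B n) x).
    exists k.+1 => // n /= kn.
    by rewrite !indicE !mem_set ?subrr//; [exists k|exact: bigsetU_sup Bkx].
  exists 0%N => // n _; rewrite !indicE !memNset ?subrr// => Unx; apply: nBx.
  exact: bigsetU_bigcup Unx.
- exact: Lfun_cst.
- move=> n x; rewrite !indicE normr1.
  by case: (_ \in _); case: (_ \in _); rewrite ?subrr ?subr0 ?sub0r ?normrN ?normr0 ?normr1.
Qed.

Lemma ideal_set_max :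
  exists2 A, ideal_set A & forall B, ideal_set B -> pi (B `\` A) = 0%E.
Proof.
pose s := ereal_sup [set pi B | B in ideal_set].
have s_ub B : ideal_set B -> (pi B <= s)%E.
  by move=> JB; apply: ereal_sup_ubound; exists B.
have s_fin : s \is a fin_num.
  rewrite ge0_fin_numE; last by rewrite -(measure0 pi) s_ub//; split; rewrite ?indic0.
  apply: le_lt_trans (ltry 1); apply: ge_ereal_sup => _ [B [mB _] <-].
  exact: probability_le1.
have /choice[B approxB] n : exists B, ideal_set B /\ (s - n.+1%:R^-1%:E < pi B)%E.
  have : (s - n.+1%:R^-1%:E < s)%E by rewrite lteBlDr// lteDl// lte_fin invr_gt0.
  by move/ereal_sup_gt => [_ [B JB <-] ?]; exists B.
have JA : ideal_set (\bigcup_n B n) by apply: ideal_set_bigcup => n; case: (approxB n).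
have s_le_A : (s <= pi (\bigcup_n B n))%E.
  apply/lee_addgt0Pr => e e0; pose n := Num.truncn e^-1.
  have ne : n.+1%:R^-1 < e by rewrite invf_plt ?posrE ?ltr0n//; exact: truncnS_gt.
  have [[mBn _] sBn] := approxB n.
  have BnA : (pi (B n) <= pi (\bigcup_n B n))%E.
    by apply: le_measure; rewrite ?inE//; [case: JA|exact: bigcup_sup].
  have := lt_le_trans sBn BnA; rewrite lteBlDr// => /ltW /le_trans; apply.
  by apply: leeD2l; rewrite lee_fin ltW.
exists (\bigcup_n B n) => // B' JB'; have [mA _] := JA; have [mB' _] := JB'.
have := s_ub _ (ideal_setU JA JB').
rewrite (measureDI pi (measurableU _ _ mA mB') mA) setDUl setDv set0U setUK => sUB.
apply/eqP; rewrite eq_le measure_ge0 andbT.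
rewrite -(leeD2rE _ _ (fin_num_measure pi _ mA)) add0e; exact: le_trans sUB s_le_A.
Qed.

Section maximal_set.
Variable A : set X.
Hypotheses (mA : measurable A) (maxA : forall B, ideal_set B -> pi (B `\` A) = 0%E).

Lemma ideal_eq0_off_max f : J f -> {ae pi, forall x, ~ A x -> f x = 0}.
Proof.
move=> Jf; apply: ae_eq0_of_level_sets (measurable_ideal Jf) (measurableC mA) _ => k.
by rewrite -setDE; apply: maxA; exact: ideal_set_level.
Qed.

(* If pi A = 0, every element of J vanishes a.e. *)
Lemma ideal_max_gt0 h : J h -> ~ {ae pi, forall x, h x = 0} -> (0 < pi A)%E.
Proof.
move=> Jh nh; rewrite lt0e measure_ge0 andbT; apply/eqP => A0; apply: nh.
have Anull : {ae pi, forall x, ~ A x} by exists A; split => // x /= /contrapT.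
by apply: filterS2 Anull (ideal_eq0_off_max Jh) => x nAx; apply.
Qed.

End maximal_set.

Lemma ideal_full A : ideal_set A -> pi (~` A) = 0%E -> inLp pi p `<=` J.
Proof.
move=> [mA JA] Ac0 f Lf; have [mf _] := (inLpP pi p f).1 Lf.
pose f_ n x := f x * \1_[set y | `|f y| <= n%:R] x.
have mf_ n : measurable_fun setT (f_ n).
  by apply: measurable_funM => //; apply: measurable_indic; exact: measurable_norm_le.
have f_le n x : `|f_ n x| <= n%:R.
  rewrite /f_ indicE normrM; case: (boolP (x \in _)); last by rewrite normr0 mulr0.
  by rewrite inE /= normr1 mulr1.
have aeA : {ae pi, forall x, A x} by exists (~` A); split => //; exact: measurableC.
apply: (@ideal_closed f_) => //.
- move=> n; apply: (@ideal_solid _ (fun x => n%:R * \1_A x)); first exact: idealZ.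
    exact: inLp_bounded (f_le n).
  apply: filterS aeA => x Ax; rewrite indicE mem_set// mulr1.
  by rewrite [X in _ <= X]ger0_norm// f_le.
apply: (Lnorm_cvg0_dominated p1 (G := f)) => //.
- by move=> n; apply: measurable_funB.
- move=> x; apply: cvg_near_cst; exists (Num.truncn `|f x|).+1 => // n /= fx_n.
  rewrite /f_ indicE mem_set ?mulr1 ?subrr//=.
  by apply/ltW/(lt_le_trans (truncnS_gt _)); rewrite ler_nat.
- move=> n x; rewrite /f_ indicE; case: (_ \in _); first by rewrite mulr1 subrr normr0.
  by rewrite mulr0 sub0r normrN.
Qed.

End closed_ideal.

Lemma phibar_gt0 (R : realType) (dX dW : measure_display)
    (X : measurableType dX) (W : measurableType dW)
    (nu : probability W R) (phi : X * X * W -> R) (x y : X) :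
  measurable_fun setT phi -> (forall z, 0 < phi z) -> (0 < phibar nu phi x y)%E.
Proof.
move=> mphi phi_gt0.
have mf : measurable_fun setT (fun e => (phi (x, y, e))%:E : \bar R).
  by apply/measurable_EFinP; exact: (measurable_fun_pair2 (x, y) mphi).
rewrite lt0e integral_ge0 ?andbT => [|e _]; last by rewrite lee_fin ltW.
apply/negP => /eqP phibar0.
have : (\int[nu]_e `|(phi (x, y, e))%:E| = 0)%E.
  by rewrite -phibar0; apply: eq_integral => e _; rewrite gee0_abs// lee_fin ltW.
move/(ae_eq_integral_abs nu measurableT mf) => [N [mN N0 sub]].
have : (nu setT <= nu N)%E.
  apply: le_measure; rewrite ?inE// => e _; apply: sub => /= /(_ I) /eqP.
  by rewrite eqe gt_eqF.
by rewrite probability_setT N0 lee_fin ler10.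
Qed.

Section kernel_iterates.
Context (R : realType) (d : measure_display) (X : measurableType d)
  (Pi : R.-pker X ~> X).

Lemma kiter_ge0 n x B : (0 <= kiter Pi n x B)%E.
Proof.
elim: n x => [|n IH] x /=; first by rewrite lee_fin indicE ler0n.
exact: integral_ge0.
Qed.

Lemma measurable_kiter n B : measurable B ->
  measurable_fun setT (fun x => kiter Pi n x B).
Proof.
move=> mB; elim: n => [|n IH] /=; first by apply/measurable_EFinP; exact: measurable_indic.
apply: (measurable_fun_integral_kernel (l := Pi)) => // [U mU|z].
- exact: measurable_kernel.
- exact: kiter_ge0.
Qed.

Section stationary.
Variable pi : probability X R.
Hypothesis pi_stationary : forall B, measurable B -> pi B = (\int[pi]_x Pi x B)%E.

Lemma stationary_null_ae N : measurable N -> pi N = 0%E ->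
  {ae pi, forall x, Pi x N = 0%E}.
Proof.
move=> mN N0.
have : (\int[pi]_x `|Pi x N| = 0)%E.
  by rewrite -N0 pi_stationary//; apply: eq_integral => x _; rewrite gee0_abs.
move/(ae_eq_integral_abs pi measurableT (measurable_kernel Pi N mN)).
by apply: filterS => x /(_ I).
Qed.

Section closed_complement.
Variable A : set X.
Hypotheses (mA : measurable A) (PiA : {ae pi, forall x, ~ A x -> Pi x A = 0%E}).

(* Stationarity makes the exceptional null set of one step null for the next step as well. *)
Lemma kiter_eq0_off n : {ae pi, forall x, ~ A x -> kiter Pi n x A = 0%E}.
Proof.
elim: n => [|n [N [mN N0 sub]]]; first by apply: aeW => x nAx /=; rewrite indicE memNset.
apply: filterS2 (stationary_null_ae mN N0) PiA => x PixN PixA nAx /=.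
rewrite (ae_eq_integral (cst 0%E)) ?integral0//; first exact: measurable_kiter.
apply: (@negligibleS _ _ _ (Pi x) (A `|` N)).
  move=> y /= /not_implyP [_ ky]; have [Ay|nAy] := pselect (A y); [by left|right].
  by apply: sub => /= h; apply: ky; exact: h nAy.
by apply: negligibleU; [exists A; split => //; exact: PixA|exists N; split].
Qed.

Lemma irreducible_compl_null : (0 < pi A)%E ->
  (forall B, measurable B -> (0 < pi B)%E -> forall x, exists n, (0 < kiter Pi n x B)%E) ->
  pi (~` A) = 0%E.
Proof.
move=> A_gt0 irr; have [N [mN N0 sub]] := ae_foralln kiter_eq0_off.
apply/eqP; rewrite eq_le measure_ge0 andbT -N0.
apply: le_measure; rewrite ?inE//; first exact: measurableC.
move=> x nAx; apply: sub => /= kiter0; have [n] := irr A mA A_gt0 x.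
by rewrite kiter0 ?ltxx.
Qed.

End closed_complement.
End stationary.
End kernel_iterates.

(* phibar > 0, so (V 1_A)(x) = 0 forces Pi(x, A) = 0. *)
Lemma Vop_indic_eq0_off (R : realType) (dX dW : measure_display)
    (X : measurableType dX) (W : measurableType dW) (Pi : R.-pker X ~> X)
    (pi : probability X R) (nu : probability W R) (phi : X * X * W -> R) (A : set X) :
  measurable_fun setT phi -> (forall z, 0 < phi z) -> measurable A ->
  {ae pi, forall x, ~ A x -> Vop Pi nu phi \1_A x = 0} ->
  {ae pi, forall x, (Pi x).-integrable setT (fun y => ((\1_A y)%:E * phibar nu phi x y)%E)} ->
  {ae pi, forall x, ~ A x -> Pi x A = 0%E}.
Proof.
move=> mphi phi_gt0 mA; apply: filterS2 => x VA0 intA nAx.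
have phibar_gt0 y := phibar_gt0 nu x y mphi phi_gt0.
have int0 : (\int[Pi x]_y ((\1_A y)%:E * phibar nu phi x y) = 0)%E.
  by rewrite -(fineK (integrable_fin_num measurableT intA)) [fine _]VA0.
have [mF _] := integrableP _ _ _ intA.
have : (\int[Pi x]_y `|(\1_A y)%:E * phibar nu phi x y| = 0)%E.
  rewrite -int0; apply: eq_integral => y _; rewrite gee0_abs//.
  by rewrite mule_ge0 ?lee_fin ?indicE ?ler0n// ltW.
move/(ae_eq_integral_abs (Pi x) measurableT mF) => [N [mN N0 sub]].
apply/eqP; rewrite eq_le measure_ge0 andbT -N0.
apply: le_measure; rewrite ?inE// => y Ay; apply: sub => /= /(_ I).
by rewrite indicE mem_set// mul1e => /eqP; rewrite gt_eqF.
Qed.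

Theorem mainTheorem9 (R : realType) (dX dW : measure_display)
  (X : measurableType dX) (W : measurableType dW)
  (Pi : R.-pker X ~> X) (pi : probability X R) (nu : probability W R)
  (phi g : X * X * W -> R) (p : R) :
  (* standing setting *)
  polish_borel R X ->
  (forall B, measurable B -> pi B = (\int[pi]_x Pi x B)%E) ->
  measurable_fun setT phi -> measurable_fun setT g ->
  (forall z, 0 <= phi z) -> (forall z, 0 <= g z) ->
  (* A1 *)
  (forall z, 0 < phi z) ->
  (0 < \int[pi]_x \int[Pi x]_y nu [set e | (0 < g (x, y, e))%R])%E ->
  (* A2 *)
  (forall B, measurable B -> (0 < pi B)%E ->
     forall x, exists n, (0 < kiter Pi n x B)%E) ->
  (* A3 *)
  1 <= p ->
  inHp pi p (ghat Pi nu phi g) ->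
  (forall h, inLp pi p h ->
     {ae pi, forall x, (Pi x).-integrable setT (fun y => ((h y)%:E * phibar nu phi x y)%E)}
     /\ inLp pi p (Vop Pi nu phi h)) ->
  (exists i : nat, Lp_compact pi p (iter i (Vop Pi nu phi))) ->
  (* conclusion: V is irreducible *)
  forall J : set (X -> R),
    Lp_closed_ideal pi p J ->
    (forall h, J h -> J (Vop Pi nu phi h)) ->
    (forall h, J h -> {ae pi, forall x, h x = 0}) \/ (forall h, inLp pi p h -> J h).
Proof.
move=> _ pi_stationary mphi _ _ _ phi_gt0 _ irr p1 _ V_Lp _ J HJ JV.
have [[h Jh nh]|all0] := pselect (exists2 h, J h & ~ {ae pi, forall x, h x = 0});
  last by left => h Jh; apply: contrapT => nh; apply: all0; exists h.
right; have [A [mA JA] maxA] := ideal_set_max p1 HJ.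
have A_gt0 := ideal_max_gt0 p1 HJ mA maxA Jh nh.
have VA0 := ideal_eq0_off_max p1 HJ mA maxA (JV _ JA).
have PiA := Vop_indic_eq0_off mphi phi_gt0 mA VA0 (V_Lp _ (inLp_indic pi p1 mA)).1.
have Ac0 := irreducible_compl_null pi_stationary mA PiA A_gt0 irr.
exact: (ideal_full p1 HJ (conj mA JA) Ac0).
Qed.
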